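(* There exists a function $f_*$ in the Schwartz space $\mathcal S(\overline{\mathbb{R}_+})$ such that (i) $f_*>0$ on $\mathbb{R}_+$ and $f_*(0)=1$; (ii) $\int_0^\infty\bigl(|f_*'(t)|^2+(t-\hat\alpha)^2|f_*(t)|^2\bigr)dt=\hat\alpha$; (iii) $\int_0^\infty(t-\hat\alpha)|f_*(t)|^2dt=0$, $\int_0^\infty(t-\hat\alpha)^2|f_*(t)|^2dt=\frac{\hat\alpha}{4}$, and $\int_0^\infty(t-\hat\alpha)^3|f_*(t)|^2dt=\frac16(1-2\hat\alpha^2)$; (iv) $\int_0^\infty f_*'(t)f_*(t)dt=-\frac12$ and $\int_0^\infty t|f_*'(t)|^2dt=\frac13+\frac{\hat\alpha^2}{12}$.
   Context: $\hat\alpha=\alpha/\sqrt2$, where $-\alpha$ is the unique negative zero of the parabolic cylinder function $D_{1/2}$ (the solution of $w''+(1-\tfrac{z^2}{4})w=0$ with $D_{1/2}(z)=e^{-z^2/4}z^{1/2}(1+O(z^{-2}))$ as $z\to+\infty$). Equivalently, $\hat\alpha=\inf\{\int_0^\infty(|f'|^2+(t-\xi)^2|f|^2)dt/|f(0)|^2:\ f(0)\neq0,\ \xi\in\mathbb{R}\}$. *)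

From Stdlib Require Import Reals.
From Coquelicot Require Import Coquelicot.
Open Scope R_scope.

(* Schwartz space on the closed half-line [0,oo): realised (Seeley extension)
   as restrictions of smooth functions on R whose derivatives of all orders
   decay faster than any polynomial on [0,oo). *)
Definition schwartz_halfline (f : R -> R) : Prop :=
  (forall (n : nat) (x : R), ex_derive (Derive_n f n) x) /\
  (forall (k n : nat), exists C : R,
      forall t : R, 0 <= t -> Rabs (t ^ k * Derive_n f n t) <= C).

Definition int_0_oo (g : R -> R) (v : R) : Prop :=
  is_RInt_gen g (at_point 0) (Rbar_locally p_infty) v.

Definition alpha_hat_quotients : R -> Prop :=
  fun r => exists (f : R -> R) (xi : R),
    schwartz_halfline f /\ f 0 <> 0 /\
    int_0_oo (fun t => (Derive f t) ^ 2 + (t - xi) ^ 2 * (f t) ^ 2)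
             (r * (f 0) ^ 2).

(* alpha_hat = inf of the quotients (a finite positive number). *)
Definition alpha_hat : R := real (Glb_Rbar alpha_hat_quotients).

From Stdlib Require Import Reals Lra Lia Psatz.
From Stdlib Require Classical_Prop FunctionalExtensionality.
From Coquelicot Require Import Coquelicot.
Open Scope R_scope.

(* For a in R put U(a) = int_0^oo w(a,y) dy and K(a) = int_0^oo y^2 w(a,y) dy with
   w(a,y) = exp(-a^2/2 - a y^2 - y^4/4).  Differentiating under the integral sign and one
   integration by parts give U' = -aU - K and K' = aK - U, hence U'' = a^2 U.  The function
   U^2 - K^2 - 2aUK decreases to 0 at +oo, so it is nonnegative, and a + K/U would be
   nondecreasing on (-oo,0] if K >= -2aU there; by the intermediate value theorem we get
   alpha > 0 with K(-alpha) = 2 alpha U(-alpha).  Then f_* = U(. - alpha)/U(-alpha) solves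
   f'' = (t - alpha)^2 f with f(0) = 1, f'(0) = -alpha, is a Schwartz function, and every
   integral in (ii)-(iv) has an antiderivative that is a quadratic form in (f_*, f_*') with
   polynomial coefficients.
   To see that alpha is the infimum, let a = t - alpha, r = K(a)/U(a), X = r (2a + r) and
   S = -(a + r) - (alpha - xi) X.  For any g,
     g'^2 + (t - xi)^2 g^2 = (g^2 S)' + (g' + (a + r + (alpha - xi) X) g)^2
                             + (alpha - xi)^2 g^2 (1 - X^2),
   and 0 <= X <= 1 for t >= 0, so the quotient of (g, xi) is at least -S(0) = alpha. *)

Lemma exp_le_compat x y : x <= y -> exp x <= exp y.
Proof. intros [H | ->]; [left; now apply exp_increasing | lra]. Qed.

Lemma exp_pow_INR y n : exp y ^ n = exp (INR n * y).
Proof.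
  induction n as [|n IH].
  - now rewrite Rmult_0_l, exp_0.
  - rewrite S_INR, <- tech_pow_Rmult, IH, <- exp_plus. f_equal. ring.
Qed.

Lemma pow_le_exp_mult y n : 0 <= y -> y ^ n <= exp (INR n * y).
Proof.
  intros Hy. rewrite <- exp_pow_INR. apply pow_incr.
  generalize (exp_ineq1_le y). lra.
Qed.

Lemma is_lim_seq_exp_opp_INR : is_lim_seq (fun n => exp (- INR n)) 0.
Proof.
  apply (filterlim_comp _ _ _ (fun n => - INR n) exp _ (Rbar_locally m_infty)).
  - apply (is_lim_seq_opp INR p_infty), is_lim_seq_INR.
  - apply is_lim_exp_m.
Qed.

Lemma ex_derive_continuity_pt f x : ex_derive f x -> continuity_pt f x.
Proof.
  intros H. apply continuity_pt_filterlim, (ex_derive_continuous (V := R_NormedModule)), H.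
Qed.

Lemma incr_of_derive_ge0 f df a b :
  (forall x, a <= x <= b -> is_derive f x (df x)) ->
  (forall x, a <= x <= b -> 0 <= df x) -> a <= b -> f a <= f b.
Proof.
  intros Hd Hpos Hab. destruct (MVT_gen f a b df) as [c [Hc Heq]].
  - intros x Hx. apply Hd. rewrite Rmin_left, Rmax_right in Hx; lra.
  - intros x Hx. apply ex_derive_continuity_pt. exists (df x).
    apply Hd. rewrite Rmin_left, Rmax_right in Hx; lra.
  - rewrite Rmin_left, Rmax_right in Hc by lra.
    assert (0 <= df c) by (apply Hpos; lra). nra.
Qed.

Lemma decr_of_derive_le0 f df a b :
  (forall x, a <= x <= b -> is_derive f x (df x)) ->
  (forall x, a <= x <= b -> df x <= 0) -> a <= b -> f b <= f a.
Proof.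
  intros Hd Hneg Hab.
  enough (- f a <= - f b) by lra.
  apply (incr_of_derive_ge0 (fun x => - f x) (fun x => - df x)); auto.
  - intros x Hx. exact (is_derive_opp f x (df x) (Hd x Hx)).
  - intros x Hx. specialize (Hneg x Hx). lra.
Qed.

Lemma nonneg_of_derive_le0_lim0 h dh a :
  (forall x, is_derive h x (dh x)) -> (forall x, dh x <= 0) ->
  filterlim h (Rbar_locally p_infty) (locally 0) -> 0 <= h a.
Proof.
  intros Hd Hneg Hlim.
  destruct (Rle_or_lt 0 (h a)) as [|Hha]; [assumption | exfalso].
  destruct (proj1 (filterlim_locally _ _) Hlim (mkposreal (- h a / 2) ltac:(lra))) as [M HM].
  set (b := Rmax (M + 1) a).
  assert (Hb : h b <= h a)
    by (apply (decr_of_derive_le0 h dh); auto; apply Rmax_r).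
  specialize (HM b (Rlt_le_trans _ _ _ (Rlt_plus_1 M) (Rmax_l _ _))).
  change (Rabs (h b - 0) < - h a / 2) in HM.
  rewrite Rminus_0_r in HM. apply Rabs_def2 in HM. lra.
Qed.

Lemma int_0_oo_ge0 g v :
  (forall t, 0 <= t -> 0 <= g t) -> int_0_oo g v -> 0 <= v.
Proof.
  intros Hg Hv.
  assert (H0 := is_RInt_gen_scal (Fa := at_point 0) (Fb := Rbar_locally p_infty) g 0 v Hv).
  apply Rle_trans with (norm (scal 0 v)); [apply norm_ge_0|].
  apply (RInt_gen_norm (V := R_CompleteNormedModule) (Fa := at_point 0)
    (Fb := Rbar_locally p_infty) (fun y => scal 0 (g y)) g);
    [| | exact H0 | exact Hv].
  - exists (fun a => a = 0) (fun b => 0 < b). reflexivity. exists 0; auto.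
    simpl. intros a b -> Hb. lra.
  - exists (fun a => a = 0) (fun b => 0 < b). reflexivity. exists 0; auto.
    simpl. intros a b -> Hb x Hx. change (Rabs (0 * g x) <= g x).
    rewrite Rmult_0_l, Rabs_R0. apply Hg. lra.
Qed.

Lemma int_0_oo_antiderivative (F g : R -> R) v :
  (forall t, is_derive F t (g t)) -> (forall t, ex_derive g t) ->
  filterlim F (Rbar_locally p_infty) (locally 0) -> v = - F 0 -> int_0_oo g v.
Proof.
  intros HF Hg Hlim ->. unfold int_0_oo.
  apply (is_RInt_gen_ext (Derive F)).
  { apply filter_forall. intros ? t _. apply is_derive_unique, HF. }
  replace (- F 0) with (0 - F 0) by ring.
  apply is_RInt_gen_Derive.
  - apply filter_forall. intros _ t _. exists (g t). apply HF.
  - apply filter_forall. intros _ t _. apply (continuous_ext g).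
    + intros. symmetry. apply is_derive_unique, HF.
    + apply (ex_derive_continuous (V := R_NormedModule)), Hg.
  - intros P HP. exact (locally_singleton _ _ HP).
  - exact Hlim.
Qed.

Lemma int_0_oo_minus f g a b :
  int_0_oo f a -> int_0_oo g b -> int_0_oo (fun t => f t - g t) (a - b).
Proof. intros Hf Hg. exact (is_RInt_gen_minus (V := R_NormedModule) f g a b Hf Hg). Qed.

(** * Rapid decay on the half-line *)

Definition rapid_decay (h : R -> R) :=
  forall N : nat, exists C, forall t, 0 <= t -> Rabs (h t) * (1 + t) ^ N <= C.

Lemma rapid_decay_ext h g :
  (forall t, 0 <= t -> h t = g t) -> rapid_decay h -> rapid_decay g.
Proof.
  intros Heq Hh N. destruct (Hh N) as [C HC].
  exists C. intros t Ht. rewrite <- Heq; auto.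
Qed.

Lemma rapid_decay_dominated h g :
  rapid_decay h -> (forall t, 0 <= t -> Rabs (g t) <= Rabs (h t)) -> rapid_decay g.
Proof.
  intros Hh Hdom N. destruct (Hh N) as [C HC]. exists C. intros t Ht.
  eapply Rle_trans; [|apply HC; exact Ht].
  apply Rmult_le_compat_r; [apply pow_le; lra | auto].
Qed.

Lemma rapid_decay_lim h : rapid_decay h -> filterlim h (Rbar_locally p_infty) (locally 0).
Proof.
  intros Hh. destruct (Hh 1%nat) as [C HC].
  apply filterlim_locally. intros eps.
  exists (Rmax 0 (C / eps)). intros t Ht.
  assert (Ht0 := Rle_lt_trans _ _ _ (Rmax_l 0 (C / eps)) Ht).
  assert (HtC := Rle_lt_trans _ _ _ (Rmax_r 0 (C / eps)) Ht).
  specialize (HC t (Rlt_le _ _ Ht0)). rewrite pow_1 in HC.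
  change (Rabs (h t - 0) < eps). rewrite Rminus_0_r.
  assert (Heps := cond_pos eps).
  apply Rmult_lt_compat_l with (r := pos eps) in HtC; [|exact Heps].
  replace (eps * (C / eps)) with C in HtC by (field; lra).
  assert (0 <= Rabs (h t)) by apply Rabs_pos. nra.
Qed.

Lemma rapid_decay_plus h g :
  rapid_decay h -> rapid_decay g -> rapid_decay (fun t => h t + g t).
Proof.
  intros Hh Hg N. destruct (Hh N) as [C1 H1], (Hg N) as [C2 H2].
  exists (C1 + C2). intros t Ht. specialize (H1 t Ht). specialize (H2 t Ht).
  assert (0 <= (1 + t) ^ N) by (apply pow_le; lra).
  assert (Rabs (h t + g t) <= Rabs (h t) + Rabs (g t)) by apply Rabs_triang.
  nra.
Qed.

Lemma rapid_decay_mult h g :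
  rapid_decay h -> rapid_decay g -> rapid_decay (fun t => h t * g t).
Proof.
  intros Hh Hg N. destruct (Hh N) as [C1 H1], (Hg 0%nat) as [C2 H2].
  exists (C1 * C2). intros t Ht. specialize (H1 t Ht). specialize (H2 t Ht).
  rewrite pow_O, Rmult_1_r in H2. rewrite Rabs_mult.
  assert (0 <= (1 + t) ^ N) by (apply pow_le; lra).
  assert (0 <= Rabs (h t)) by apply Rabs_pos. assert (0 <= Rabs (g t)) by apply Rabs_pos.
  replace (Rabs (h t) * Rabs (g t) * (1 + t) ^ N)
    with (Rabs (h t) * (1 + t) ^ N * Rabs (g t)) by ring.
  apply Rmult_le_compat; auto. apply Rmult_le_pos; auto.
Qed.

Lemma rapid_decay_gauss h s B :
  (forall t, 0 <= t -> Rabs (h t) <= B * exp (- (t - s) ^ 2 / 2)) -> rapid_decay h.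
Proof.
  intros Hh N. exists (Rabs B * exp (INR N * s + INR N ^ 2 / 2)). intros t Ht.
  assert (Hpow : (1 + t) ^ N <= exp (INR N * t)).
  { rewrite <- exp_pow_INR. apply pow_incr. generalize (exp_ineq1_le t). lra. }
  assert (Hexp : exp (- (t - s) ^ 2 / 2) * exp (INR N * t) <= exp (INR N * s + INR N ^ 2 / 2)).
  { rewrite <- exp_plus. apply exp_le_compat.
    assert (0 <= (t - s - INR N) ^ 2) by apply pow2_ge_0. nra. }
  specialize (Hh t Ht).
  assert (0 <= (1 + t) ^ N) by (apply pow_le; lra).
  assert (0 < exp (- (t - s) ^ 2 / 2)) by apply exp_pos.
  assert (Rabs (h t) <= Rabs B * exp (- (t - s) ^ 2 / 2))
    by (eapply Rle_trans; [exact Hh | apply Rmult_le_compat_r; [lra | apply Rle_abs]]).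
  assert (0 <= Rabs B) by apply Rabs_pos.
  apply Rle_trans with (Rabs B * exp (- (t - s) ^ 2 / 2) * exp (INR N * t)).
  - apply Rmult_le_compat; auto using Rabs_pos.
  - rewrite Rmult_assoc. apply Rmult_le_compat_l; auto.
Qed.

Inductive is_poly : (R -> R) -> Prop :=
  | is_poly_const c : is_poly (fun _ => c)
  | is_poly_id : is_poly (fun x => x)
  | is_poly_plus p q : is_poly p -> is_poly q -> is_poly (fun x => p x + q x)
  | is_poly_mult p q : is_poly p -> is_poly q -> is_poly (fun x => p x * q x).

Lemma is_poly_pow p n : is_poly p -> is_poly (fun x => p x ^ n).
Proof.
  intros Hp. induction n as [|n IH].
  - exact (is_poly_const 1).
  - exact (is_poly_mult p _ Hp IH).
Qed.

Ltac solve_is_poly :=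
  repeat first
    [ apply is_poly_const | apply is_poly_id | apply is_poly_pow
    | apply is_poly_plus | apply is_poly_mult ].

Lemma is_poly_derive p :
  is_poly p -> exists dp, is_poly dp /\ forall x, is_derive p x (dp x).
Proof.
  induction 1 as [c| |p q _ [dp [Hdp Dp]] _ [dq [Hdq Dq]]|p q Hp [dp [Hdp Dp]] Hq [dq [Hdq Dq]]].
  - exists (fun _ => 0). split; [apply is_poly_const|]. intros x. auto_derive; auto.
  - exists (fun _ => 1). split; [apply is_poly_const|]. intros x. auto_derive; auto.
  - exists (fun x => dp x + dq x). split; [now apply is_poly_plus|].
    intros x. exact (is_derive_plus p q x _ _ (Dp x) (Dq x)).
  - exists (fun x => dp x * q x + p x * dq x). split; [solve_is_poly; auto|].
    intros x. exact (is_derive_mult p q x _ _ (Dp x) (Dq x) Rmult_comm).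
Qed.

Lemma is_poly_bound p :
  is_poly p -> exists A d, forall t, 0 <= t -> Rabs (p t) <= A * (1 + t) ^ d.
Proof.
  induction 1 as [c| |p q _ [A1 [d1 B1]] _ [A2 [d2 B2]]|p q _ [A1 [d1 B1]] _ [A2 [d2 B2]]].
  - exists (Rabs c), 0%nat. intros; simpl; lra.
  - exists 1, 1%nat. intros t Ht. rewrite Rabs_pos_eq; simpl; lra.
  - exists (Rabs A1 + Rabs A2), (d1 + d2)%nat. intros t Ht.
    specialize (B1 t Ht). specialize (B2 t Ht).
    assert ((1 + t) ^ d1 <= (1 + t) ^ (d1 + d2)) by (apply Rle_pow; lia || lra).
    assert ((1 + t) ^ d2 <= (1 + t) ^ (d1 + d2)) by (apply Rle_pow; lia || lra).
    assert (0 <= (1 + t) ^ d1) by (apply pow_le; lra).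
    assert (0 <= (1 + t) ^ d2) by (apply pow_le; lra).
    assert (A1 <= Rabs A1) by apply Rle_abs. assert (A2 <= Rabs A2) by apply Rle_abs.
    assert (0 <= Rabs A1) by apply Rabs_pos. assert (0 <= Rabs A2) by apply Rabs_pos.
    eapply Rle_trans; [apply Rabs_triang|]. nra.
  - exists (Rabs A1 * Rabs A2), (d1 + d2)%nat. intros t Ht.
    specialize (B1 t Ht). specialize (B2 t Ht). rewrite Rabs_mult, pow_add.
    assert (0 <= (1 + t) ^ d1) by (apply pow_le; lra).
    assert (0 <= (1 + t) ^ d2) by (apply pow_le; lra).
    assert (A1 <= Rabs A1) by apply Rle_abs. assert (A2 <= Rabs A2) by apply Rle_abs.
    replace (Rabs A1 * Rabs A2 * ((1 + t) ^ d1 * (1 + t) ^ d2))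
      with (Rabs A1 * (1 + t) ^ d1 * (Rabs A2 * (1 + t) ^ d2)) by ring.
    apply Rmult_le_compat; try apply Rabs_pos; nra.
Qed.

Lemma rapid_decay_poly_mult p h :
  is_poly p -> rapid_decay h -> rapid_decay (fun t => p t * h t).
Proof.
  intros Hp Hh N. destruct (is_poly_bound p Hp) as [A [d Hb]].
  destruct (Hh (d + N)%nat) as [C HC].
  exists (Rabs A * C). intros t Ht. specialize (Hb t Ht). specialize (HC t Ht).
  rewrite pow_add in HC. rewrite Rabs_mult.
  assert (0 <= (1 + t) ^ d) by (apply pow_le; lra).
  assert (0 <= (1 + t) ^ N) by (apply pow_le; lra).
  assert (0 <= Rabs (h t)) by apply Rabs_pos.
  assert (A <= Rabs A) by apply Rle_abs. assert (0 <= Rabs A) by apply Rabs_pos.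
  apply Rle_trans with (Rabs A * (1 + t) ^ d * Rabs (h t) * (1 + t) ^ N).
  - apply Rmult_le_compat_r; auto. apply Rmult_le_compat_r; auto. nra.
  - replace (Rabs A * (1 + t) ^ d * Rabs (h t) * (1 + t) ^ N)
      with (Rabs A * (Rabs (h t) * ((1 + t) ^ d * (1 + t) ^ N))) by ring.
    apply Rmult_le_compat_l; auto.
Qed.

Lemma rapid_decay_minus h g :
  rapid_decay h -> rapid_decay g -> rapid_decay (fun t => h t - g t).
Proof.
  intros Hh Hg. apply (rapid_decay_ext (fun t => h t + (-1) * g t)); [intros; ring|].
  apply rapid_decay_plus; [exact Hh|].
  apply rapid_decay_poly_mult; [apply is_poly_const | exact Hg].
Qed.

Ltac solve_rapid_decay :=
  first
    [ assumption
    | apply rapid_decay_plus; solve_rapid_decay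
    | apply rapid_decay_minus; solve_rapid_decay
    | apply rapid_decay_mult; solve [solve_rapid_decay]
    | apply rapid_decay_poly_mult; [solve_is_poly | solve_rapid_decay] ].

Lemma rapid_decay_of_schwartz g : schwartz_halfline g -> rapid_decay g.
Proof.
  intros [_ Hb] N. destruct (Hb 0%nat 0%nat) as [C0 H0], (Hb N 0%nat) as [C1 H1].
  exists (2 ^ N * (C0 + C1)). intros t Ht. specialize (H0 t Ht). specialize (H1 t Ht).
  simpl in H0, H1. rewrite Rmult_1_l in H0.
  rewrite Rabs_mult, <- RPow_abs, Rabs_pos_eq in H1 by lra.
  assert (Hbin : (1 + t) ^ N <= 2 ^ N * (1 + t ^ N)).
  { assert (0 <= t ^ N) by (apply pow_le; lra). assert (0 <= 2 ^ N) by (apply pow_le; lra).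
    destruct (Rle_or_lt t 1).
    - apply Rle_trans with (2 ^ N); [apply pow_incr; lra | nra].
    - apply Rle_trans with ((2 * t) ^ N); [apply pow_incr; lra|].
      rewrite Rpow_mult_distr. nra. }
  assert (0 <= Rabs (g t)) by apply Rabs_pos. assert (0 <= 2 ^ N) by (apply pow_le; lra).
  apply Rle_trans with (Rabs (g t) * (2 ^ N * (1 + t ^ N))).
  - apply Rmult_le_compat_l; auto.
  - replace (Rabs (g t) * (2 ^ N * (1 + t ^ N)))
      with (2 ^ N * (Rabs (g t) + t ^ N * Rabs (g t))) by ring.
    apply Rmult_le_compat_l; lra.
Qed.

(** * The moments of the quartic Gaussian weight *)

(* The factor [exp (- a ^ 2 / 2)] makes the system [U' = - a U - K], [K' = a K - U] below
   symmetric and gives [moment k a] Gaussian decay as [a -> +oo]. *)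
Definition weight (a y : R) := exp (- a ^ 2 / 2 - a * y ^ 2 - y ^ 4 / 4).
Definition moment_integrand (k : nat) (a y : R) := y ^ (2 * k) * weight a y.
Definition partial_moment (k n : nat) (a : R) := RInt (moment_integrand k a) 0 (INR n).
Definition moment (k : nat) (a : R) := real (Lim_seq (fun n => partial_moment k n a)).

Definition tail_const (c : R) (k : nat) := exp (6 + INR k ^ 2 + 4 * c ^ 2).

(* [auto_derive] unfolds the powers in the exponent of [weight]; the result is convertible
   but not syntactically equal to it, which blocks [ring]. *)
Ltac fold_weight w :=
  repeat match goal with
  | |- context [exp ?e] => replace (exp e) with w by reflexivity
  end.

Lemma moment_integrand_bound k c a y : 0 <= c -> -c <= a -> 0 <= y ->
  moment_integrand k a y <= exp (- a ^ 2 / 2) * tail_const c k * exp (- y).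
Proof.
  intros Hc Ha Hy. unfold moment_integrand, weight, tail_const.
  replace (- a ^ 2 / 2 - a * y ^ 2 - y ^ 4 / 4)
    with (- a ^ 2 / 2 + (- a * y ^ 2 - y ^ 4 / 4)) by ring.
  rewrite exp_plus.
  replace (y ^ (2 * k) * (exp (- a ^ 2 / 2) * exp (- a * y ^ 2 - y ^ 4 / 4)))
    with (exp (- a ^ 2 / 2) * (exp (- a * y ^ 2 - y ^ 4 / 4) * y ^ (2 * k))) by ring.
  rewrite Rmult_assoc. apply Rmult_le_compat_l; [left; apply exp_pos|].
  apply Rle_trans with (exp (- a * y ^ 2 - y ^ 4 / 4) * exp (INR (2 * k) * y)).
  { apply Rmult_le_compat_l; [left; apply exp_pos | now apply pow_le_exp_mult]. }
  rewrite <- !exp_plus. apply exp_le_compat.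
  rewrite mult_INR. simpl INR. set (kk := INR k).
  assert (0 <= kk) by apply pos_INR.
  assert (- a * y ^ 2 <= c * y ^ 2) by (apply Rmult_le_compat_r; [nra | lra]).
  assert (0 <= (y ^ 2 / 4 - 2 * c) ^ 2) by apply pow2_ge_0.
  assert (0 <= (y ^ 2 / 4 - 1) ^ 2) by apply pow2_ge_0.
  assert (0 <= (y ^ 2 / 4 - 2) ^ 2) by apply pow2_ge_0.
  assert (0 <= (y - 1) ^ 2) by apply pow2_ge_0.
  assert (0 <= (y - kk) ^ 2) by apply pow2_ge_0.
  nra.
Qed.

Lemma moment_integrand_continuous k a y : continuous (moment_integrand k a) y.
Proof.
  apply (ex_derive_continuous (V := R_NormedModule)).
  unfold moment_integrand, weight. auto_derive. auto.
Qed.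

Lemma ex_RInt_moment_integrand k a u v : ex_RInt (moment_integrand k a) u v.
Proof.
  apply (ex_RInt_continuous (V := R_CompleteNormedModule)).
  intros. apply moment_integrand_continuous.
Qed.

Lemma moment_integrand_pos k a y : 0 < y -> 0 < moment_integrand k a y.
Proof. intros. apply Rmult_lt_0_compat; [now apply pow_lt | apply exp_pos]. Qed.

Lemma moment_integrand_ge0 k a y : 0 <= y -> 0 <= moment_integrand k a y.
Proof. intros. apply Rmult_le_pos; [now apply pow_le | left; apply exp_pos]. Qed.

Lemma is_RInt_exp_opp u v : is_RInt (fun y => exp (- y)) u v (exp (- u) - exp (- v)).
Proof.
  assert (E : exp (- u) - exp (- v) = - exp (- v) - - exp (- u)) by ring.
  rewrite E. apply (is_RInt_derive (fun y => - exp (- y))).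
  - intros. auto_derive; auto. ring.
  - intros. apply (ex_derive_continuous (V := R_NormedModule)). auto_derive. auto.
Qed.

Lemma partial_moment_increment k c a n m : 0 <= c -> -c <= a -> (n <= m)%nat ->
  0 <= partial_moment k m a - partial_moment k n a
    <= exp (- a ^ 2 / 2) * tail_const c k * exp (- INR n).
Proof.
  intros Hc Ha Hnm. unfold partial_moment.
  assert (Hch : RInt (moment_integrand k a) 0 (INR m)
                = RInt (moment_integrand k a) 0 (INR n)
                  + RInt (moment_integrand k a) (INR n) (INR m)).
  { symmetry. exact (RInt_Chasles (V := R_CompleteNormedModule) _ _ _ _
                      (ex_RInt_moment_integrand _ _ _ _) (ex_RInt_moment_integrand _ _ _ _)). }
  rewrite Hch, Rplus_comm. unfold Rminus. rewrite Rplus_assoc, Rplus_opp_r, Rplus_0_r.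
  assert (Hn := pos_INR n). apply le_INR in Hnm.
  set (B := exp (- a ^ 2 / 2) * tail_const c k).
  assert (HB : is_RInt (fun y => B * exp (- y)) (INR n) (INR m)
                 (B * (exp (- INR n) - exp (- INR m)))).
  { exact (is_RInt_scal _ _ _ B _ (is_RInt_exp_opp (INR n) (INR m))). }
  split.
  - apply RInt_ge_0; [lra | apply ex_RInt_moment_integrand |].
    intros. apply moment_integrand_ge0. lra.
  - apply Rle_trans with (B * (exp (- INR n) - exp (- INR m))).
    + rewrite <- (is_RInt_unique _ _ _ _ HB).
      apply RInt_le; [lra | apply ex_RInt_moment_integrand | eexists; exact HB |].
      intros. apply moment_integrand_bound; lra.
    + assert (0 < exp (- INR m)) by apply exp_pos.
      assert (0 < B) by (apply Rmult_lt_0_compat; apply exp_pos).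
      nra.
Qed.

Lemma partial_moment_incr k n a : partial_moment k n a <= partial_moment k (S n) a.
Proof.
  enough (H : 0 <= partial_moment k (S n) a - partial_moment k n a) by lra.
  apply (partial_moment_increment k (Rabs a) a n (S n));
    [apply Rabs_pos | generalize (Rcomplements.Rabs_maj2 a); lra | lia].
Qed.

Lemma partial_moment_bound k c a n : 0 <= c -> -c <= a ->
  0 <= partial_moment k n a <= exp (- a ^ 2 / 2) * tail_const c k.
Proof.
  intros Hc Ha. assert (H := partial_moment_increment k c a 0 n Hc Ha (Nat.le_0_l n)).
  assert (H0 : partial_moment k 0 a = 0) by exact (RInt_point (V := R_CompleteNormedModule) _ _).
  rewrite H0, Rminus_0_r in H. simpl INR in H. rewrite Ropp_0, exp_0, Rmult_1_r in H. exact H.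
Qed.

Lemma is_lim_seq_partial_moment k a :
  is_lim_seq (fun n => partial_moment k n a) (moment k a).
Proof.
  assert (Ha : - Rabs a <= a) by (generalize (Rcomplements.Rabs_maj2 a); lra).
  assert (Hc := Rabs_pos a).
  destruct (ex_finite_lim_seq_incr (fun n => partial_moment k n a)
              (exp (- a ^ 2 / 2) * tail_const (Rabs a) k)) as [l Hl].
  - intros n. apply partial_moment_incr.
  - intros n. apply (partial_moment_bound k (Rabs a) a n); auto.
  - unfold moment. now rewrite (is_lim_seq_unique _ _ Hl).
Qed.

Lemma moment_pos_bound k c a : 0 <= c -> -c <= a ->
  0 < moment k a <= exp (- a ^ 2 / 2) * tail_const c k.
Proof.
  intros Hc Ha. split.
  - apply Rlt_le_trans with (partial_moment k 1 a).
    + unfold partial_moment. simpl INR.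
      apply RInt_gt_0; [lra | intros; apply moment_integrand_pos; lra |].
      intros. apply moment_integrand_continuous.
    + apply (is_lim_seq_incr_compare (fun n => partial_moment k n a));
        [apply is_lim_seq_partial_moment | intros; apply partial_moment_incr].
  - apply (is_lim_seq_le _ _ _ _ (fun n => proj2 (partial_moment_bound k c a n Hc Ha))
             (is_lim_seq_partial_moment k a) (is_lim_seq_const _)).
Qed.

Lemma continuity_2d_pt_comp_derivable (h : R -> R) (g : R -> R -> R) x y :
  (forall z, ex_derive h z) -> continuity_2d_pt g x y ->
  continuity_2d_pt (fun u v => h (g u v)) x y.
Proof.
  intros Hh Hg. apply (continuity_1d_2d_pt_comp h g); auto.
  apply ex_derive_continuity_pt, Hh.
Qed.

Lemma moment_integrand_continuity_2d k a y :
  continuity_2d_pt (fun u v => moment_integrand k u v) a y.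
Proof.
  unfold moment_integrand, weight. apply continuity_2d_pt_mult.
  - apply (continuity_2d_pt_comp_derivable (fun z => z ^ (2 * k)) (fun u v => v)).
    + intros. auto_derive. auto.
    + apply continuity_2d_pt_id2.
  - apply (continuity_2d_pt_comp_derivable exp (fun u v => - u ^ 2 / 2 - u * v ^ 2 - v ^ 4 / 4)).
    + intros. auto_derive. auto.
    + repeat first
        [ apply continuity_2d_pt_minus | apply continuity_2d_pt_mult
        | apply continuity_2d_pt_opp | apply continuity_2d_pt_id1
        | apply continuity_2d_pt_id2 | apply continuity_2d_pt_const
        | apply (continuity_2d_pt_comp_derivable (fun z => z ^ 2));
            [intros; auto_derive; auto|]
        | apply (continuity_2d_pt_comp_derivable (fun z => z ^ 4));
            [intros; auto_derive; auto|]
        | apply (continuity_2d_pt_comp_derivable (fun z => z / 2));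
            [intros; auto_derive; auto|]
        | apply (continuity_2d_pt_comp_derivable (fun z => z / 4));
            [intros; auto_derive; auto|] ].
Qed.

Lemma moment_integrand_derive_param k a y :
  is_derive (fun u => moment_integrand k u y) a
    (- a * moment_integrand k a y - moment_integrand (S k) a y).
Proof.
  unfold moment_integrand, weight. auto_derive; auto. fold_weight (weight a y).
  replace (2 * S k)%nat with (2 + (k + (k + 0)))%nat by lia.
  replace (2 * k)%nat with (k + (k + 0))%nat by lia.
  rewrite !pow_add. field.
Qed.

Lemma partial_moment_derive k n a :
  is_derive (partial_moment k n) a (- a * partial_moment k n a - partial_moment (S k) n a).
Proof.
  assert (Hd : forall t, Derive (fun u => moment_integrand k u t) a
                         = - a * moment_integrand k a t - moment_integrand (S k) a t).
  { intros. apply is_derive_unique, moment_integrand_derive_param. }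
  assert (Hint : is_RInt (fun t => - a * moment_integrand k a t - moment_integrand (S k) a t)
                   0 (INR n) (- a * partial_moment k n a - partial_moment (S k) n a)).
  { apply (is_RInt_minus (V := R_NormedModule)).
    - apply (is_RInt_scal (V := R_NormedModule)), (RInt_correct (V := R_CompleteNormedModule)).
      apply ex_RInt_moment_integrand.
    - apply (RInt_correct (V := R_CompleteNormedModule)), ex_RInt_moment_integrand. }
  rewrite <- (is_RInt_unique _ _ _ _ Hint), <- (RInt_ext _ _ _ _ (fun t _ => Hd t)).
  apply (is_derive_RInt_param (fun u t => moment_integrand k u t)).
  - apply filter_forall. intros u t _. eexists. apply moment_integrand_derive_param.
  - intros t _. apply (continuity_2d_pt_ext
      (fun u v => - u * moment_integrand k u v - moment_integrand (S k) u v)).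
    + intros u v. symmetry. apply is_derive_unique, moment_integrand_derive_param.
    + apply continuity_2d_pt_minus; [apply continuity_2d_pt_mult|];
        auto using continuity_2d_pt_opp, continuity_2d_pt_id1, moment_integrand_continuity_2d.
  - apply filter_forall. intros. apply ex_RInt_moment_integrand.
Qed.

Lemma CVU_cauchy_of_exp_bound (g : nat -> R -> R) D B : 0 < B ->
  (forall n m x, D x -> (n <= m)%nat -> Rabs (g m x - g n x) <= B * exp (- INR n)) ->
  CVU_cauchy g D.
Proof.
  intros HB Hg eps.
  assert (Heps : 0 < eps / (2 * B)) by (apply Rdiv_lt_0_compat; [apply cond_pos | lra]).
  destruct (proj2 (is_lim_seq_spec _ _) is_lim_seq_exp_opp_INR (mkposreal _ Heps)) as [N HN].
  exists N. intros n m x Dx Hn Hm.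
  specialize (HN N (le_n N)). simpl in HN. rewrite Rminus_0_r, Rabs_pos_eq in HN
    by (left; apply exp_pos).
  assert (H1 := Hg N n x Dx Hn). assert (H2 := Hg N m x Dx Hm).
  replace (g n x - g m x) with ((g n x - g N x) - (g m x - g N x)) by ring.
  eapply Rle_lt_trans; [apply Rabs_triang|]. rewrite Rabs_Ropp.
  apply Rmult_lt_compat_l with (r := 2 * B) in HN; [|lra].
  replace (2 * B * (eps / (2 * B))) with (pos eps) in HN by (field; lra).
  lra.
Qed.

Lemma partial_moment_cauchy k M x n m : 0 < M -> -M < x -> (n <= m)%nat ->
  Rabs (partial_moment k m x - partial_moment k n x) <= tail_const M k * exp (- INR n).
Proof.
  intros HM Hx Hnm.
  destruct (partial_moment_increment k M x n m) as [H0 H1]; [lra | lra | exact Hnm |].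
  rewrite Rabs_pos_eq by exact H0. eapply Rle_trans; [exact H1|].
  apply Rmult_le_compat_r; [left; apply exp_pos|].
  rewrite <- (Rmult_1_l (tail_const M k)) at 2.
  apply Rmult_le_compat_r; [left; apply exp_pos|].
  rewrite <- exp_0. apply exp_le_compat. generalize (pow2_ge_0 x). lra.
Qed.

Lemma Derive_partial_moment k n x :
  Derive (partial_moment k n) x = - x * partial_moment k n x - partial_moment (S k) n x.
Proof. apply is_derive_unique, partial_moment_derive. Qed.

Lemma Derive_partial_moment_cauchy k M x n m : - M < x < M -> (n <= m)%nat ->
  Rabs (Derive (partial_moment k m) x - Derive (partial_moment k n) x)
  <= (M * tail_const M k + tail_const M (S k)) * exp (- INR n).
Proof.
  intros Hx Hnm. rewrite !Derive_partial_moment.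
  replace (- x * partial_moment k m x - partial_moment (S k) m x
           - (- x * partial_moment k n x - partial_moment (S k) n x))
    with (- x * (partial_moment k m x - partial_moment k n x)
          - (partial_moment (S k) m x - partial_moment (S k) n x)) by ring.
  eapply Rle_trans; [apply Rabs_triang|]. rewrite Rabs_Ropp, Rabs_mult, Rabs_Ropp.
  assert (HM : 0 < M) by lra.
  assert (H1 := partial_moment_cauchy k M x n m HM (proj1 Hx) Hnm).
  assert (H2 := partial_moment_cauchy (S k) M x n m HM (proj1 Hx) Hnm).
  assert (Rabs x * Rabs (partial_moment k m x - partial_moment k n x)
          <= M * (tail_const M k * exp (- INR n)))
    by (apply Rmult_le_compat; auto using Rabs_pos; apply Rabs_le; lra).
  nra.
Qed.

Lemma moment_derive k a : is_derive (moment k) a (- a * moment k a - moment (S k) a).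
Proof.
  set (M := Rabs a + 1).
  set (D := fun x => - M < x < M).
  assert (HT : forall j, 0 < tail_const M j) by (intros; apply exp_pos).
  assert (HM : 0 < M) by (generalize (Rabs_pos a); unfold M; lra).
  replace (- a * moment k a - moment (S k) a)
    with (real (Lim_seq (fun n => Derive (partial_moment k n) a))).
  - apply (CVU_Derive (fun n => partial_moment k n) D).
    + apply open_and; [apply open_gt | apply open_lt].
    + intros x y z Dx Dy Hz. unfold D in *. lra.
    + apply CVU_dom_cauchy, (CVU_cauchy_of_exp_bound _ _ (tail_const M k)); [apply HT|].
      intros n m x Dx Hnm. apply partial_moment_cauchy; auto. apply Dx.
    + intros n x _. eexists. apply partial_moment_derive.
    + intros n x _. apply (continuity_pt_ext
        (fun x => - x * partial_moment k n x - partial_moment (S k) n x)).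
      * intros. symmetry. apply Derive_partial_moment.
      * apply ex_derive_continuity_pt. auto_derive.
        repeat split; eexists; apply partial_moment_derive.
    + apply CVU_dom_cauchy.
      apply (CVU_cauchy_of_exp_bound _ _ (M * tail_const M k + tail_const M (S k))).
      * generalize (HT k) (HT (S k)). nra.
      * intros n m x Dx Hnm. now apply Derive_partial_moment_cauchy.
    + unfold D, M. generalize (Rcomplements.Rabs_maj2 a) (Rle_abs a). lra.
  - rewrite (Lim_seq_ext _ (fun n => - a * partial_moment k n a - partial_moment (S k) n a))
      by (intros; apply Derive_partial_moment).
    rewrite (is_lim_seq_unique _ (- a * moment k a - moment (S k) a)); [reflexivity|].
    apply is_lim_seq_minus'; [|apply is_lim_seq_partial_moment].
    exact (is_lim_seq_scal_l _ (- a) _ (is_lim_seq_partial_moment k a)).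
Qed.

Lemma partial_moment_by_parts n a :
  partial_moment 0 n a - 2 * a * partial_moment 1 n a - partial_moment 2 n a
  = INR n * weight a (INR n).
Proof.
  assert (Hd : forall y, is_derive (fun y => y * weight a y) y
      (moment_integrand 0 a y - 2 * a * moment_integrand 1 a y - moment_integrand 2 a y)).
  { intros. unfold moment_integrand, weight. auto_derive; auto. fold_weight (weight a y).
    simpl. field. }
  assert (H1 : is_RInt (fun y => moment_integrand 0 a y - 2 * a * moment_integrand 1 a y
                                 - moment_integrand 2 a y) 0 (INR n)
                 (minus (INR n * weight a (INR n)) (0 * weight a 0))).
  { apply (is_RInt_derive (fun y => y * weight a y)); intros y _; [apply Hd|].
    apply (ex_derive_continuous (V := R_NormedModule)).
    unfold moment_integrand, weight. auto_derive. auto. }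
  assert (H2 : is_RInt (fun y => moment_integrand 0 a y - 2 * a * moment_integrand 1 a y
                                 - moment_integrand 2 a y) 0 (INR n)
      (partial_moment 0 n a - 2 * a * partial_moment 1 n a - partial_moment 2 n a)).
  { assert (Hc : forall k, is_RInt (moment_integrand k a) 0 (INR n) (partial_moment k n a))
      by (intros; apply (RInt_correct (V := R_CompleteNormedModule)), ex_RInt_moment_integrand).
    apply (is_RInt_minus (V := R_NormedModule)
             (fun y => moment_integrand 0 a y - 2 * a * moment_integrand 1 a y)); [|apply Hc].
    apply (is_RInt_minus (V := R_NormedModule) (moment_integrand 0 a)); [apply Hc|].
    apply (is_RInt_scal (V := R_NormedModule) (moment_integrand 1 a)), Hc. }
  rewrite <- (is_RInt_unique _ _ _ _ H2), (is_RInt_unique _ _ _ _ H1).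
  change (INR n * weight a (INR n) - 0 * weight a 0 = INR n * weight a (INR n)). ring.
Qed.

Lemma is_lim_seq_boundary_term a : is_lim_seq (fun n => INR n * weight a (INR n)) 0.
Proof.
  set (c := Rabs a).
  assert (Hc : 0 <= c) by apply Rabs_pos.
  assert (Ha : - c <= a) by (generalize (Rcomplements.Rabs_maj2 a); unfold c; lra).
  apply (is_lim_seq_le_le (fun _ => 0) _
           (fun n => exp (- a ^ 2 / 2) * (tail_const c 0 + tail_const c 1) * exp (- INR n))).
  - intros n. assert (Hn := pos_INR n). assert (Hw : 0 < weight a (INR n)) by apply exp_pos.
    assert (B0 := moment_integrand_bound 0 c a (INR n) Hc Ha Hn).
    assert (B1 := moment_integrand_bound 1 c a (INR n) Hc Ha Hn).
    unfold moment_integrand in B0, B1. change (2 * 0)%nat with 0%nat in B0.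
    change (2 * 1)%nat with 2%nat in B1. rewrite pow_O, Rmult_1_l in B0.
    split; [nra|].
    assert (INR n * weight a (INR n) <= weight a (INR n) + INR n ^ 2 * weight a (INR n)).
    { assert (INR n <= 1 + INR n ^ 2) by nra. nra. }
    lra.
  - apply is_lim_seq_const.
  - replace (Finite 0) with (Rbar_mult (exp (- a ^ 2 / 2) * (tail_const c 0 + tail_const c 1)) 0)
      by (simpl; f_equal; ring).
    apply is_lim_seq_scal_l, is_lim_seq_exp_opp_INR.
Qed.

Lemma moment_by_parts a : moment 2 a = moment 0 a - 2 * a * moment 1 a.
Proof.
  assert (Hlim := is_lim_seq_boundary_term a).
  apply (is_lim_seq_ext _ _ _ (fun n => eq_sym (partial_moment_by_parts n a))) in Hlim.
  assert (Hlim' : is_lim_seq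
      (fun n => partial_moment 0 n a - 2 * a * partial_moment 1 n a - partial_moment 2 n a)
      (moment 0 a - 2 * a * moment 1 a - moment 2 a)).
  { apply is_lim_seq_minus'; [apply is_lim_seq_minus'|]; try apply is_lim_seq_partial_moment.
    exact (is_lim_seq_scal_l _ (2 * a) _ (is_lim_seq_partial_moment 1 a)). }
  assert (E := is_lim_seq_unique _ _ Hlim). rewrite (is_lim_seq_unique _ _ Hlim') in E.
  injection E. lra.
Qed.

(** * The functions U and K *)

Definition U (a : R) := moment 0 a.
Definition K (a : R) := moment 1 a.

Lemma U_derive a : is_derive U a (- a * U a - K a).
Proof. apply moment_derive. Qed.

Lemma K_derive a : is_derive K a (a * K a - U a).
Proof.
  assert (H := moment_derive 1 a). rewrite moment_by_parts in H.
  unfold K, U. replace (a * moment 1 a - moment 0 a)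
    with (- a * moment 1 a - (moment 0 a - 2 * a * moment 1 a)) by ring.
  exact H.
Qed.

Lemma ex_derive_U a : ex_derive U a.
Proof. eexists. apply U_derive. Qed.

Lemma ex_derive_K a : ex_derive K a.
Proof. eexists. apply K_derive. Qed.

Lemma Derive_U a : Derive U a = - a * U a - K a.
Proof. apply is_derive_unique, U_derive. Qed.

Lemma Derive_K a : Derive K a = a * K a - U a.
Proof. apply is_derive_unique, K_derive. Qed.

Lemma moment_pos k a : 0 < moment k a.
Proof.
  apply (moment_pos_bound k (Rabs a) a);
    [apply Rabs_pos | generalize (Rcomplements.Rabs_maj2 a); lra].
Qed.

Lemma U_pos a : 0 < U a.
Proof. apply moment_pos. Qed.

Lemma K_pos a : 0 < K a.
Proof. apply moment_pos. Qed.

Lemma rapid_decay_moment_shift k s : rapid_decay (fun t => moment k (t - s)).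
Proof.
  apply (rapid_decay_gauss _ s (tail_const (Rabs s) k)). intros t Ht.
  rewrite Rabs_pos_eq by (left; apply moment_pos). rewrite Rmult_comm.
  apply moment_pos_bound; [apply Rabs_pos | generalize (Rle_abs s); lra].
Qed.

Lemma rapid_decay_U s : rapid_decay (fun t => U (t - s)).
Proof. apply rapid_decay_moment_shift. Qed.

Lemma rapid_decay_K s : rapid_decay (fun t => K (t - s)).
Proof. apply rapid_decay_moment_shift. Qed.

Definition Psi (a : R) := 2 * a * U a * K a + K a ^ 2.

Lemma Psi_derive a : is_derive Psi a (- 2 * a * U a ^ 2).
Proof.
  unfold Psi. auto_derive; [repeat split; auto using ex_derive_U, ex_derive_K|].
  rewrite Derive_U, Derive_K. ring.
Qed.

Lemma Psi_le_U2 a : Psi a <= U a ^ 2.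
Proof.
  enough (0 <= U a ^ 2 - Psi a) by lra.
  apply (nonneg_of_derive_le0_lim0 (fun a => U a ^ 2 - Psi a) (fun x => - 2 * U x * K x)).
  - intros x. unfold Psi. auto_derive; [repeat split; auto using ex_derive_U, ex_derive_K|].
    rewrite Derive_U, Derive_K. ring.
  - intros x. generalize (U_pos x) (K_pos x). nra.
  - apply rapid_decay_lim.
    apply (rapid_decay_ext (fun t => U (t - 0) * U (t - 0)
             - (2 * t * U (t - 0) * K (t - 0) + K (t - 0) * K (t - 0)))).
    { intros t _. unfold Psi. rewrite Rminus_0_r. ring. }
    assert (HU := rapid_decay_U 0). assert (HK := rapid_decay_K 0).
    solve_rapid_decay.
Qed.

Lemma K_le_U a : K a <= (1 + 2 * Rabs a) * U a.
Proof.
  assert (H := Psi_le_U2 a). unfold Psi in H.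
  assert (HU := U_pos a). assert (HK := K_pos a). assert (Ha := Rabs_pos a).
  destruct (Rle_or_lt (K a) ((1 + 2 * Rabs a) * U a)) as [|Hlt]; [assumption | exfalso].
  assert (Hm : - (2 * Rabs a * U a * K a) <= 2 * a * U a * K a).
  { assert (0 <= U a * K a) by nra.
    generalize (Rcomplements.Rabs_maj2 a). nra. }
  assert (U a * K a < K a * (K a - 2 * Rabs a * U a)) by nra.
  assert (U a * U a < U a * K a) by nra.
  nra.
Qed.

Definition UK_ratio (a : R) := K a / U a.

Lemma UK_ratio_derive a : is_derive UK_ratio a (UK_ratio a ^ 2 + 2 * a * UK_ratio a - 1).
Proof.
  unfold UK_ratio. assert (H := U_pos a).
  auto_derive; [repeat split; auto using ex_derive_U, ex_derive_K; lra|].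
  rewrite Derive_U, Derive_K. field. lra.
Qed.

Lemma ex_derive_UK_ratio a : ex_derive UK_ratio a.
Proof. eexists. apply UK_ratio_derive. Qed.

Lemma Derive_UK_ratio a : Derive UK_ratio a = UK_ratio a ^ 2 + 2 * a * UK_ratio a - 1.
Proof. apply is_derive_unique, UK_ratio_derive. Qed.

Lemma UK_ratio_pos a : 0 < UK_ratio a.
Proof. apply Rdiv_lt_0_compat; [apply K_pos | apply U_pos]. Qed.

Lemma UK_ratio_le a : UK_ratio a <= 1 + 2 * Rabs a.
Proof.
  unfold UK_ratio. assert (HU := U_pos a).
  apply (Rmult_le_reg_r (U a)); [exact HU|].
  replace (K a / U a * U a) with (K a) by (field; lra). apply K_le_U.
Qed.

(* Otherwise [a + UK_ratio a] would be nondecreasing on [(-oo, 0]] while exceeding [- a]. *)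
Lemma exists_UK_ratio_lt : exists a, a < 0 /\ UK_ratio a < - 2 * a.
Proof.
  apply Classical_Prop.NNPP. intros Hnot.
  assert (Hall : forall a, a <= 0 -> - 2 * a <= UK_ratio a).
  { intros a Ha. destruct (Rle_or_lt (- 2 * a) (UK_ratio a)) as [|Hlt]; [assumption|].
    destruct (Req_dec a 0) as [->|Ha0].
    - generalize (UK_ratio_pos 0). lra.
    - exfalso. apply Hnot. exists a. split; lra. }
  set (w := fun a => a + UK_ratio a).
  set (a1 := - (w 0 + 1)).
  assert (Hr0 := UK_ratio_pos 0).
  assert (Ha1 : a1 < 0) by (unfold a1, w; lra).
  assert (Hw : w a1 <= w 0).
  { apply (incr_of_derive_ge0 w (fun x => UK_ratio x * (2 * x + UK_ratio x))); [| |lra].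
    - intros x _. unfold w.
      replace (UK_ratio x * (2 * x + UK_ratio x))
        with (1 + (UK_ratio x ^ 2 + 2 * x * UK_ratio x - 1)) by ring.
      apply (is_derive_plus (fun x => x) UK_ratio);
        [apply (is_derive_id (K := R_AbsRing)) | apply UK_ratio_derive].
    - intros x Hx. assert (H := Hall x ltac:(lra)).
      assert (Hx0 := UK_ratio_pos x).
      apply Rmult_le_pos; lra. }
  assert (H := Hall a1 ltac:(lra)). unfold a1, w in *. cbv beta in *. lra.
Qed.

Lemma exists_U_K_root : exists al, 0 < al /\ K (- al) = 2 * al * U (- al).
Proof.
  destruct exists_UK_ratio_lt as [a [Ha Hr]].
  assert (HK : K a < - 2 * a * U a).
  { unfold UK_ratio in Hr. assert (HU := U_pos a).
    apply (Rmult_lt_compat_r (U a)) in Hr; [|exact HU].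
    replace (K a / U a * U a) with (K a) in Hr by (field; lra). lra. }
  set (F := fun x => 2 * x * U (- x) - K (- x)).
  assert (Fc : continuity F).
  { intros x. apply ex_derive_continuity_pt. unfold F.
    auto_derive. repeat split; auto using ex_derive_U, ex_derive_K. }
  assert (HK0 := K_pos 0).
  destruct (IVT F 0 (- a) Fc) as [z [Hz Fz]]; [lra | unfold F; rewrite Ropp_0; lra | ..].
  { unfold F. rewrite Ropp_involutive. lra. }
  exists z. unfold F in Fz. split; [|lra].
  destruct (Req_dec z 0) as [->|]; [rewrite Ropp_0 in Fz; lra | lra].
Qed.

Lemma Psi_nonneg al a : 0 < al -> K (- al) = 2 * al * U (- al) -> - al <= a -> 0 <= Psi a.
Proof.
  intros Hal Hroot Ha.
  destruct (Rle_or_lt 0 a) as [Ha0|Ha0].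
  - unfold Psi. assert (HU := U_pos a). assert (HK := K_pos a).
    assert (0 <= a * U a * K a) by (repeat apply Rmult_le_pos; lra). nra.
  - replace 0 with (Psi (- al)) by (unfold Psi; rewrite Hroot; ring).
    apply (incr_of_derive_ge0 Psi (fun x => - 2 * x * U x ^ 2));
      [intros; apply Psi_derive | | exact Ha].
    intros x Hx. generalize (pow2_ge_0 (U x)). nra.
Qed.

Definition psi_ratio (a : R) := UK_ratio a * (2 * a + UK_ratio a).

Lemma psi_ratio_bounds al a : 0 < al -> K (- al) = 2 * al * U (- al) -> - al <= a ->
  0 <= psi_ratio a <= 1.
Proof.
  intros Hal Hroot Ha. assert (HU := U_pos a).
  assert (E : psi_ratio a = Psi a / U a ^ 2) by (unfold psi_ratio, UK_ratio, Psi; field; lra).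
  assert (H0 := Psi_nonneg al a Hal Hroot Ha). assert (H1 := Psi_le_U2 a).
  assert (HU2 : 0 < U a ^ 2) by nra.
  rewrite E. split.
  - apply Rdiv_le_0_compat; assumption.
  - apply (Rmult_le_reg_r (U a ^ 2)); [exact HU2|].
    replace (Psi a / U a ^ 2 * U a ^ 2) with (Psi a) by (field; lra). lra.
Qed.

(** * The minimiser *)

Definition fstar (al t : R) := U (t - al) / U (- al).
Definition fstar' (al t : R) := (- (t - al) * U (t - al) - K (t - al)) / U (- al).

Lemma fstar_derive al t : is_derive (fstar al) t (fstar' al t).
Proof.
  unfold fstar, fstar'. assert (H := U_pos (- al)).
  auto_derive; [apply ex_derive_U|]. rewrite Derive_U. unfold Rminus. field. lra.
Qed.

Lemma fstar'_derive al t : is_derive (fstar' al) t ((t - al) ^ 2 * fstar al t).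
Proof.
  unfold fstar, fstar'. assert (H := U_pos (- al)).
  auto_derive; [repeat split; auto using ex_derive_U, ex_derive_K|].
  rewrite Derive_U, Derive_K. unfold Rminus. field. lra.
Qed.

Lemma ex_derive_fstar al t : ex_derive (fstar al) t.
Proof. eexists. apply fstar_derive. Qed.

Lemma ex_derive_fstar' al t : ex_derive (fstar' al) t.
Proof. eexists. apply fstar'_derive. Qed.

Lemma Derive_fstar_pt al t : Derive (fstar al) t = fstar' al t.
Proof. apply is_derive_unique, fstar_derive. Qed.

Lemma Derive_fstar'_pt al t : Derive (fstar' al) t = (t - al) ^ 2 * fstar al t.
Proof. apply is_derive_unique, fstar'_derive. Qed.

Lemma Derive_fstar al : Derive (fstar al) = fstar' al.
Proof. apply FunctionalExtensionality.functional_extensionality, Derive_fstar_pt. Qed.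

Lemma fstar_pos al t : 0 < fstar al t.
Proof. apply Rdiv_lt_0_compat; apply U_pos. Qed.

Lemma fstar_0 al : fstar al 0 = 1.
Proof. unfold fstar. rewrite Rminus_0_l. field. generalize (U_pos (- al)). lra. Qed.

Lemma rapid_decay_fstar al : rapid_decay (fstar al).
Proof.
  apply (rapid_decay_ext (fun t => / U (- al) * U (t - al))); [intros; unfold fstar, Rdiv; ring|].
  apply rapid_decay_poly_mult; [apply is_poly_const | apply rapid_decay_U].
Qed.

Lemma rapid_decay_fstar' al : rapid_decay (fstar' al).
Proof.
  apply (rapid_decay_ext
           (fun t => - / U (- al) * (t - al) * U (t - al) - / U (- al) * K (t - al)));
    [intros; unfold fstar', Rdiv; ring|].
  assert (HU := rapid_decay_U al). assert (HK := rapid_decay_K al).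
  solve_rapid_decay.
Qed.

Definition poly_combination al (h : R -> R) := exists p q, is_poly p /\ is_poly q /\
  forall t, h t = p t * fstar al t + q t * fstar' al t.

Lemma poly_combination_derive al h : poly_combination al h ->
  (forall t, ex_derive h t) /\ poly_combination al (Derive h).
Proof.
  intros [p [q [Hp [Hq Hh]]]].
  destruct (is_poly_derive p Hp) as [dp [Hdp Dp]], (is_poly_derive q Hq) as [dq [Hdq Dq]].
  assert (D : forall t, is_derive h t
                ((dp t + q t * (t - al) ^ 2) * fstar al t + (p t + dq t) * fstar' al t)).
  { intros t. apply (is_derive_ext (fun t => p t * fstar al t + q t * fstar' al t));
      [intros; symmetry; apply Hh|].
    replace ((dp t + q t * (t - al) ^ 2) * fstar al t + (p t + dq t) * fstar' al t)
      with ((dp t * fstar al t + p t * fstar' al t)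
            + (dq t * fstar' al t + q t * ((t - al) ^ 2 * fstar al t))) by ring.
    apply (is_derive_plus (fun t => p t * fstar al t) (fun t => q t * fstar' al t)).
    - exact (is_derive_mult p (fstar al) t _ _ (Dp t) (fstar_derive al t) Rmult_comm).
    - exact (is_derive_mult q (fstar' al) t _ _ (Dq t) (fstar'_derive al t) Rmult_comm). }
  split; [intros t; eexists; apply D|].
  exists (fun t => dp t + q t * (t - al) ^ 2), (fun t => p t + dq t).
  split; [solve_is_poly; auto|]. split; [solve_is_poly; auto|].
  intros t. apply is_derive_unique, D.
Qed.

Lemma poly_combination_Derive_n al n : poly_combination al (Derive_n (fstar al) n).
Proof.
  induction n as [|n IH].
  - exists (fun _ => 1), (fun _ => 0). split; [apply is_poly_const|].
    split; [apply is_poly_const|]. intros t. simpl. ring.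
  - exact (proj2 (poly_combination_derive al _ IH)).
Qed.

Lemma schwartz_fstar al : schwartz_halfline (fstar al).
Proof.
  split.
  - intros n. apply (poly_combination_derive al _ (poly_combination_Derive_n al n)).
  - intros k n. destruct (poly_combination_Derive_n al n) as [p [q [Hp [Hq Hh]]]].
    assert (Hr : rapid_decay (Derive_n (fstar al) n)).
    { apply (rapid_decay_ext (fun t => p t * fstar al t + q t * fstar' al t));
        [intros; symmetry; apply Hh|].
      apply rapid_decay_plus; apply rapid_decay_poly_mult;
        auto using rapid_decay_fstar, rapid_decay_fstar'. }
    destruct (Hr k) as [C HC]. exists C. intros t Ht. specialize (HC t Ht).
    rewrite Rabs_mult, <- RPow_abs, Rabs_pos_eq, Rmult_comm by lra.
    eapply Rle_trans; [|exact HC].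
    apply Rmult_le_compat_l; [apply Rabs_pos | apply pow_incr; lra].
Qed.

Section Integrals_of_fstar.

Variable al : R.
Hypothesis Hroot : K (- al) = 2 * al * U (- al).

Lemma fstar'_0 : fstar' al 0 = - al.
Proof.
  unfold fstar'. rewrite Rminus_0_l, Hroot. field. generalize (U_pos (- al)). lra.
Qed.

Ltac int_by_antiderivative F :=
  apply (int_0_oo_antiderivative F);
  [ intros t; auto_derive; [repeat split; auto using ex_derive_fstar, ex_derive_fstar'|];
    rewrite ?Derive_fstar_pt, ?Derive_fstar'_pt; field
  | intros t; auto_derive; repeat split; auto using ex_derive_fstar, ex_derive_fstar'
  | apply rapid_decay_lim;
    pose proof (rapid_decay_fstar al); pose proof (rapid_decay_fstar' al); solve_rapid_decay
  | rewrite fstar_0, ?fstar'_0; field ].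

Lemma int_fstar_energy :
  int_0_oo (fun t => fstar' al t ^ 2 + (t - al) ^ 2 * fstar al t ^ 2) al.
Proof. int_by_antiderivative (fun t => fstar al t * fstar' al t). Qed.

Lemma int_fstar_moment1 : int_0_oo (fun t => (t - al) * fstar al t ^ 2) 0.
Proof.
  int_by_antiderivative (fun t => - / 2 * (fstar' al t * fstar' al t)
                                  + / 2 * ((t - al) ^ 2 * (fstar al t * fstar al t))).
Qed.

Lemma int_fstar_moment2 : int_0_oo (fun t => (t - al) ^ 2 * fstar al t ^ 2) (al / 4).
Proof.
  int_by_antiderivative (fun t => - / 4 * ((t - al) * (fstar' al t * fstar' al t))
                                  + / 4 * ((t - al) ^ 3 * (fstar al t * fstar al t))
                                  + / 4 * (fstar al t * fstar' al t)).
Qed.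

Lemma int_fstar_moment3 :
  int_0_oo (fun t => (t - al) ^ 3 * fstar al t ^ 2) (/ 6 * (1 - 2 * al ^ 2)).
Proof.
  int_by_antiderivative (fun t => / 3 * ((t - al) * (fstar al t * fstar' al t))
                                  - / 6 * (fstar al t * fstar al t)
                                  - / 6 * ((t - al) ^ 2 * (fstar' al t * fstar' al t))
                                  + / 6 * ((t - al) ^ 4 * (fstar al t * fstar al t))).
Qed.

Lemma int_fstar_deriv_mult : int_0_oo (fun t => fstar' al t * fstar al t) (- / 2).
Proof. int_by_antiderivative (fun t => / 2 * (fstar al t * fstar al t)). Qed.

Lemma int_fstar_weighted_energy :
  int_0_oo (fun t => t * fstar' al t ^ 2) (/ 3 + al ^ 2 / 12).
Proof.
  int_by_antiderivative (fun t => 2 / 3 * ((t - al) * (fstar al t * fstar' al t))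
                                  - / 3 * (fstar al t * fstar al t)
                                  + / 6 * ((t - al) ^ 2 * (fstar' al t * fstar' al t))
                                  - / 6 * ((t - al) ^ 4 * (fstar al t * fstar al t))
                                  + 3 * al / 4 * (fstar al t * fstar' al t)
                                  + al / 4 * ((t - al) * (fstar' al t * fstar' al t))
                                  - al / 4 * ((t - al) ^ 3 * (fstar al t * fstar al t))).
Qed.

End Integrals_of_fstar.

(** * The lower bound *)

(* For [xi = al] this is the logarithmic derivative of [fstar al]. *)
Definition picone_coef (al xi t : R) :=
  - ((t - al) + UK_ratio (t - al)) - (al - xi) * psi_ratio (t - al).

Definition picone_coef' (al xi t : R) :=
  let r := UK_ratio (t - al) in
  let dr := r ^ 2 + 2 * (t - al) * r - 1 in
  - (1 + dr) - (al - xi) * (dr * (2 * (t - al) + r) + r * (2 + dr)).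

Lemma picone_coef_derive al xi t : is_derive (picone_coef al xi) t (picone_coef' al xi t).
Proof.
  unfold picone_coef, picone_coef', psi_ratio.
  auto_derive; [repeat split; auto using ex_derive_UK_ratio|].
  rewrite Derive_UK_ratio. unfold Rminus. ring.
Qed.

Lemma ex_derive_picone_coef' al xi t : ex_derive (picone_coef' al xi) t.
Proof.
  unfold picone_coef'. auto_derive. repeat split; auto using ex_derive_UK_ratio.
Qed.

Lemma picone_identity al xi t g dg :
  dg ^ 2 + (t - xi) ^ 2 * g ^ 2
  - (2 * g * dg * picone_coef al xi t + g ^ 2 * picone_coef' al xi t)
  = (dg + ((t - al) + UK_ratio (t - al) + (al - xi) * psi_ratio (t - al)) * g) ^ 2
    + (al - xi) ^ 2 * g ^ 2 * (1 - psi_ratio (t - al) ^ 2).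
Proof. unfold picone_coef, picone_coef', psi_ratio. ring. Qed.

Section Lower_bound.

Variables al xi : R.
Hypothesis Hal : 0 < al.
Hypothesis Hroot : K (- al) = 2 * al * U (- al).

Lemma picone_coef_0 : picone_coef al xi 0 = - al.
Proof.
  assert (Hr : UK_ratio (- al) = 2 * al).
  { unfold UK_ratio. rewrite Hroot. field. generalize (U_pos (- al)). lra. }
  unfold picone_coef, psi_ratio. rewrite Rminus_0_l, Hr. ring.
Qed.

Lemma picone_coef_bound t : 0 <= t ->
  Rabs (picone_coef al xi t) <= 3 * t + (3 * al + 1 + Rabs (al - xi)).
Proof.
  intros Ht.
  assert (HX := psi_ratio_bounds al (t - al) Hal Hroot ltac:(lra)).
  assert (Hr0 := UK_ratio_pos (t - al)). assert (Hr1 := UK_ratio_le (t - al)).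
  assert (Hta : Rabs (t - al) <= t + al) by (apply Rabs_le; lra).
  assert (Hxi := Rabs_pos (al - xi)).
  unfold picone_coef.
  eapply Rle_trans; [apply Rabs_triang|]. rewrite Rabs_Ropp, Rabs_Ropp, Rabs_mult.
  eapply Rle_trans; [apply Rplus_le_compat_r, Rabs_triang|].
  rewrite (Rabs_pos_eq (UK_ratio _)), (Rabs_pos_eq (psi_ratio _)) by lra.
  assert (Rabs (al - xi) * psi_ratio (t - al) <= Rabs (al - xi)) by nra.
  lra.
Qed.

Lemma picone_term_lim g : schwartz_halfline g ->
  filterlim (fun t => g t ^ 2 * picone_coef al xi t) (Rbar_locally p_infty) (locally 0).
Proof.
  intros Hs. apply rapid_decay_lim.
  apply (rapid_decay_dominated (fun t => (3 * t + (3 * al + 1 + Rabs (al - xi))) * (g t * g t))).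
  - assert (Hr := rapid_decay_of_schwartz g Hs). solve_rapid_decay.
  - intros t Ht.
    assert (Hb := picone_coef_bound t Ht).
    assert (Hgg : 0 <= g t * g t) by nra.
    replace (g t ^ 2) with (g t * g t) by ring.
    rewrite (Rabs_mult (g t * g t)), (Rabs_mult _ (g t * g t)), (Rabs_pos_eq (g t * g t) Hgg).
    assert (Rabs (picone_coef al xi t) <= Rabs (3 * t + (3 * al + 1 + Rabs (al - xi))))
      by (eapply Rle_trans; [exact Hb | apply Rle_abs]).
    nra.
Qed.

Lemma picone_lower_bound g r : schwartz_halfline g -> g 0 <> 0 ->
  int_0_oo (fun t => Derive g t ^ 2 + (t - xi) ^ 2 * g t ^ 2) (r * g 0 ^ 2) -> al <= r.
Proof.
  intros Hs Hg0 Hint.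
  assert (Hg : forall x, ex_derive g x) by exact (proj1 Hs 0%nat).
  assert (Hg' : forall x, ex_derive (Derive g) x) by exact (proj1 Hs 1%nat).
  set (G := fun t => g t ^ 2 * picone_coef al xi t).
  set (dG := fun t => 2 * g t * Derive g t * picone_coef al xi t
                      + g t ^ 2 * picone_coef' al xi t).
  assert (HdG : int_0_oo dG (al * g 0 ^ 2)).
  { apply (int_0_oo_antiderivative G).
    - intros t. unfold G, dG.
      auto_derive; [repeat split; auto; eexists; apply picone_coef_derive|].
      change (Derive (fun x => g x) t) with (Derive g t).
      replace (Derive (fun x => picone_coef al xi x) t) with (picone_coef' al xi t)
        by (symmetry; apply is_derive_unique, picone_coef_derive).
      ring.
    - intros t. unfold dG. auto_derive.
      repeat split; auto; [eexists; apply picone_coef_derive | apply ex_derive_picone_coef'].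
    - apply picone_term_lim, Hs.
    - unfold G. rewrite picone_coef_0. ring. }
  assert (Hgap : 0 <= r * g 0 ^ 2 - al * g 0 ^ 2).
  { refine (int_0_oo_ge0 _ _ _ (int_0_oo_minus _ _ _ _ Hint HdG)).
    intros t Ht. cbv beta. unfold dG. rewrite picone_identity.
    assert (HX := psi_ratio_bounds al (t - al) Hal Hroot ltac:(lra)).
    apply Rplus_le_le_0_compat; [apply pow2_ge_0|].
    apply Rmult_le_pos; [apply Rmult_le_pos; apply pow2_ge_0 | nra]. }
  assert (0 < g 0 ^ 2) by (apply pow2_gt_0; exact Hg0).
  nra.
Qed.

End Lower_bound.

Lemma alpha_hat_eq al : 0 < al -> K (- al) = 2 * al * U (- al) -> alpha_hat = al.
Proof.
  intros Hal Hroot. unfold alpha_hat.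
  rewrite (is_glb_Rbar_unique _ al); [reflexivity|]. split.
  - intros x [g [xi [Hs [Hg0 Hint]]]]. exact (picone_lower_bound al xi Hal Hroot g x Hs Hg0 Hint).
  - intros b Hb. apply Hb. exists (fstar al), al.
    split; [apply schwartz_fstar|]. split; [rewrite fstar_0; lra|].
    rewrite Derive_fstar, fstar_0, pow1, Rmult_1_r. apply int_fstar_energy, Hroot.
Qed.

Theorem proposition2p1 :
  exists f : R -> R,
    schwartz_halfline f /\
    (* (i) *)
    (forall t : R, 0 < t -> 0 < f t) /\ f 0 = 1 /\
    (* (ii) *)
    int_0_oo (fun t => (Derive f t) ^ 2 + (t - alpha_hat) ^ 2 * (f t) ^ 2)
             alpha_hat /\
    (* (iii) *)
    int_0_oo (fun t => (t - alpha_hat) * (f t) ^ 2) 0 /\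
    int_0_oo (fun t => (t - alpha_hat) ^ 2 * (f t) ^ 2) (alpha_hat / 4) /\
    int_0_oo (fun t => (t - alpha_hat) ^ 3 * (f t) ^ 2)
             (/ 6 * (1 - 2 * alpha_hat ^ 2)) /\
    (* (iv) *)
    int_0_oo (fun t => Derive f t * f t) (- / 2) /\
    int_0_oo (fun t => t * (Derive f t) ^ 2) (/ 3 + alpha_hat ^ 2 / 12).
Proof.
  destruct exists_U_K_root as [al [Hal Hroot]].
  rewrite (alpha_hat_eq al Hal Hroot).
  exists (fstar al). rewrite Derive_fstar.
  split; [apply schwartz_fstar|].
  split; [intros; apply fstar_pos|].
  split; [apply fstar_0|].
  split; [apply int_fstar_energy, Hroot|].
  split; [apply int_fstar_moment1, Hroot|].
  split; [apply int_fstar_moment2, Hroot|].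
  split; [apply int_fstar_moment3, Hroot|].
  split; [apply int_fstar_deriv_mult | apply int_fstar_weighted_energy, Hroot].
Qed.
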